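(* Assume that for every time index $k \ge 0$ there exists $B_k < \infty$ such that $w_k(x_{0:k}) \le B_k$ for all $x_{0:k} \in \mathcal{S}_k$. Then for any $k>0$, the Markov kernel $$K_k^{draw}(x_{0:k}, dx_{0:k}') = \alpha_k(x_{0:k},x_{0:k}')\,(\widehat{\pi}_{k-1}^{(N_p)}\times q_k)(dx_{0:k}') + \Big(1 - \int_{E_k}\alpha_k(x_{0:k},y_{0:k})\,(\widehat{\pi}_{k-1}^{(N_p)}\times q_k)(dy_{0:k})\Big)\delta_{x_{0:k}}(dx_{0:k}'),$$ with $\alpha_k(x_{0:k},x_{0:k}') = \min\big(1, w_k(x_{0:k}')/w_k(x_{0:k})\big)$, is uniformly ergodic with invariant distribution $$\breve{\pi}_k^{(N_p)}(dx_{0:k}) = \frac{\pi_{k/k-1}(x_{0:k-1})\,(\widehat{\pi}_{k-1}^{(N_p)}\times\overline{\pi}_k)(dx_{0:k})}{\widehat{\pi}_{k-1}^{(N_p)}(\pi_{k/k-1})}.$$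
   Context: Let $(E,\mathcal{F})$ be a measurable space and $E_k = E^{k+1}$ with product $\sigma$-algebra; densities are with respect to a fixed reference measure. A hidden Markov model has initial density $p(x_0)$, transition densities $p(x_l\mid x_{l-1})$ and likelihoods $p(z_l\mid x_l)$ for fixed observations $z_1,z_2,\dots$. Let $\gamma_k(x_{0:k}) = p(x_0)\prod_{l=1}^k p(x_l\mid x_{l-1})p(z_l\mid x_l)$, $Z_k = \int\gamma_k\in(0,\infty)$, $\pi_k = \gamma_k/Z_k$, $\mathcal{S}_k = \{x_{0:k}:\pi_k(x_{0:k})>0\}$. For a measure $\mu$ and function $f$, $\mu(f)=\int f\,d\mu$. Proposals: $q_0$ a probability density on $E$; for $k>0$, $q_k(x_{0:k-1},x_k)$ a probability density in $x_k$ given $x_{0:k-1}$; for a probability measure $\mu$ on $E_{k-1}$, $(\mu\times q_k)(dx_{0:k}) = \mu(dx_{0:k-1})q_k(x_{0:k-1},dx_k)$. Weights: $w_0=\gamma_0/q_0$, $w_k(x_{0:k}) = \gamma_k(x_{0:k})/(\gamma_{k-1}(x_{0:k-1})q_k(x_{0:k-1},x_k))$. Further, with $\pi_k(x_{0:k-1}) = \int_E \pi_k(x_{0:k})\,dx_k$, define $\overline{\pi}_k(x_{0:k-1},x_k) = \pi_k(x_{0:k})/\pi_k(x_{0:k-1}) = p(x_k\mid x_{k-1},z_k)$ and $\pi_{k/k-1}(x_{0:k-1}) = \pi_k(x_{0:k-1})/\pi_{k-1}(x_{0:k-1})$ (proportional to $p(z_k\mid x_{k-1})$). Here $\widehat{\pi}_{k-1}^{(N_p)}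 = \frac{1}{N_p}\sum_{i=1}^{N_p}\delta_{x_{0:k-1}^i}$ is the empirical measure of the $N_p$ samples produced at time $k-1$ by the sequential MCMC algorithm: at time $0$ a Markov chain with kernel $K_0^{draw}$ (propose from $q_0$, accept with probability $\min(1,w_0(x')/w_0(x))$) started in $\mathcal{S}_0$; at each time $l>0$ a Markov chain started in $\mathcal{S}_l$ whose iterations apply $K_l^{draw}$ (defined as in the claim with $l$ in place of $k$) followed by a refinement Markov kernel leaving $\breve{\pi}_l^{(N_p)}$ invariant. *)

From HB Require Import structures.
From mathcomp Require Import all_boot all_order all_algebra.
From mathcomp Require Import all_classical all_reals all_analysis.
Set Implicit Arguments. Unset Strict Implicit. Unset Printing Implicit Defensive.
Import Order.TTheory GRing.Theory Num.Theory.
Local Open Scope ring_scope.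

Section SMCMC.
Context {R : realType} {d : measure_display} {E : measurableType d}.
Variable lam : {measure set E -> \bar R}.
Variable p0 : E -> R.
Variable trans : E -> E -> R.                    (* trans x x' = p(x' | x) *)
Variable lik : nat -> E -> R.                    (* lik l x = p(z_l | x_l = x) *)
Variable q : forall k : nat, k.-tuple E -> E -> R.
(* q k x_{0:k-1} x_k = q_k(x_{0:k-1}, x_k) for k > 0;
   q 0 [tuple] x_0 plays the role of q_0(x_0). *)

Fixpoint chain (l : nat) (prev : E) (s : seq E) : R :=
  match s with
  | [::] => 1
  | x :: s' => trans prev x * lik l x * chain l.+1 x s'
  end.

(* gamma_k(x_{0:k}) for s = [:: x_0; ...; x_k];  by convention the empty
   path has gamma = 1 (so that w_0 = gamma_0 / q_0 is the case k = 0 of w_k) *)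
Definition gamma (s : seq E) : R :=
  match s with
  | [::] => 1
  | x0 :: s' => p0 x0 * chain 1 x0 s'
  end.

Fixpoint itint (n : nat) (f : seq E -> \bar R) : \bar R :=
  match n with
  | 0 => f [::]
  | n'.+1 => (\int[lam]_x itint n' (fun s => f (x :: s)))%E
  end.

Definition Z (k : nat) : \bar R := itint k.+1 (fun s => (gamma s)%:E).

Definition pi (k : nat) (s : seq E) : R := gamma s / fine (Z k).

Definition inS (k : nat) (s : seq E) : Prop := 0 < pi k s.

Definition snoc k (x : k.-tuple E) (y : E) : k.+1.-tuple E := [tuple of rcons x y].
Definition prefix k (x : k.+1.-tuple E) : k.-tuple E :=
  [tuple tnth x (widen_ord (leqnSn k) i) | i < k].
Definition tlast k (x : k.+1.-tuple E) : E := tnth x ord_max.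

Definition ratio (a b : R) : \bar R := if b == 0 then +oo%E else (a / b)%:E.

(* incremental weight w_k(x_{0:k}) = gamma_k / (gamma_{k-1} q_k);
   for k = 0 this is w_0 = gamma_0 / q_0 *)
Definition weight k (x : k.+1.-tuple E) : \bar R :=
  ratio (gamma x) (gamma (prefix x) * q (prefix x) (tlast x)).

Definition piMarg k (x : k.-tuple E) : R :=
  fine (\int[lam]_y (pi k (snoc x y))%:E)%E.

Definition pibar k (x : k.-tuple E) (y : E) : R := pi k (snoc x y) / piMarg x.

Definition pikk1 k (x : k.-tuple E) : R := piMarg x / pi k.-1 x.

Section Empirical.
Variables (k N : nat) (xs : 'I_N -> k.-tuple E).
(* samples x^1_{0:k-1}, ..., x^N_{0:k-1}; empirical measure pihat_{k-1} *)

Definition emp_int (g : k.-tuple E -> R) : R := N%:R^-1 * \sum_(i < N) g (xs i).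

Definition empmix (r : k.-tuple E -> E -> R) (f : k.+1.-tuple E -> R) : R :=
  N%:R^-1 * \sum_(i < N)
     fine (\int[lam]_y (f (snoc (xs i) y) * r (xs i) y)%:E)%E.

Definition alpha (x x' : k.+1.-tuple E) : R :=
  Num.min 1 (fine (weight x') / fine (weight x)).

(* int f(x') K_k^draw(x, dx') *)
Definition Kint (f : k.+1.-tuple E -> R) (x : k.+1.-tuple E) : R :=
  empmix (@q k) (fun y => alpha x y * f y)
  + (1 - empmix (@q k) (alpha x)) * f x.

Fixpoint Kn (n : nat) (x : k.+1.-tuple E) (A : set (k.+1.-tuple E)) : R :=
  match n with
  | 0 => \1_A x
  | n'.+1 => Kint (fun y => Kn n' y A) x
  end.

Definition pibreve_int (f : k.+1.-tuple E -> R) : R :=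
  empmix (@pibar k) (fun x => pikk1 (prefix x) * f x) / emp_int (@pikk1 k).

Definition pibreve (A : set (k.+1.-tuple E)) : R := pibreve_int (\1_A).

End Empirical.
End SMCMC.

From Pilot Require Import Defs.
From HB Require Import structures.
From mathcomp Require Import all_boot all_order all_algebra.
From mathcomp Require Import all_classical all_reals all_analysis.
From mathcomp Require Import measurable_realfun ring lra.
Import Order.TTheory GRing.Theory Num.Theory.
Set Implicit Arguments. Unset Strict Implicit. Unset Printing Implicit Defensive.
Local Open Scope ring_scope.

(* K_k^draw is an independent Metropolis-Hastings kernel.  Its proposal is the mixture
   mu = pihat_{k-1} x q_k and, since
     w_k(x) q_k(x_{0:k-1}, x_k) = gamma_k(x_{0:k}) / gamma_{k-1}(x_{0:k-1}),
   breve pi_k has density proportional to w_k with respect to mu.  Invariance is detailed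
   balance: w_k(x) alpha_k(x, y) = min(w_k(x), w_k(y)) is symmetric in x and y.  For x in S_k
   we have alpha_k(x, y) >= w_k(y) / B, so K_k^draw(x, .) >= eps breve pi_k with
   eps = mu(w_k) / B > 0.  By this Doeblin minorization the oscillation of K^n 1_A around
   breve pi_k(A) on S_k shrinks by the factor 1 - eps at each step. *)

Section RealFieldFacts.
Variable R : realFieldType.

Lemma mulr_min1_div (a b : R) : 0 <= a -> 0 <= b -> a * Num.min 1 (b / a) = Num.min a b.
Proof.
move=> a0 b0; have [->|a_neq0] := eqVneq a 0; first by rewrite mul0r min_l.
have a_gt0 : 0 < a by rewrite lt_def a_neq0.
have [ba|ab] := leP b a.
  by rewrite !min_r ?ler_pdivrMr ?mul1r // mulrC mulfVK.
by rewrite !min_l ?ler_pdivlMr ?mul1r ?mulr1 // ltW.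
Qed.

Lemma min1_div_ge (a b c : R) : 0 < a -> a <= c -> 0 <= b -> b <= c ->
  b / c <= Num.min 1 (b / a).
Proof.
move=> a_gt0 ac b0 bc; have c_gt0 := lt_le_trans a_gt0 ac.
rewrite le_min ler_pdivrMr // mul1r bc /=.
by rewrite ler_wpM2l // lef_pV2 ?posrE.
Qed.

Lemma mean_01 n (a : 'I_n -> R) : (0 < n)%N ->
  (forall i, 0 <= a i <= 1) -> 0 <= n%:R^-1 * \sum_(i < n) a i <= 1.
Proof.
move=> n_gt0 a01; have n_pos : 0 < n%:R :> R by rewrite ltr0n.
rewrite mulr_ge0 ?invr_ge0 ?ler0n ?sumr_ge0 //=; last by move=> i _; case/andP: (a01 i).
rewrite ler_pdivrMl // mulr1 -[n in n%:R]card_ord -sumr_const.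
by apply: ler_sum => i _; case/andP: (a01 i).
Qed.

End RealFieldFacts.

Section MeasurableInv.
Local Open Scope classical_set_scope.

Lemma measurable_inv (R : realType) : measurable_fun setT (@GRing.inv R).
Proof.
have -> : [set: R] = [set 0] `|` ~` [set 0] by rewrite setUv.
apply/measurable_funU => //; first exact: measurableC.
split.
- move=> _ B mB; have [B0|B0] := pselect (B (0:R)^-1).
  + rewrite (_ : _ `&` _ = [set 0]) //; apply/seteqP; split=> [x [->]//|x ->]; by split.
  + rewrite (_ : _ `&` _ = set0) //; apply/seteqP; split=> [x [-> /B0]//|x //].
- apply: open_continuous_measurable_fun.
  + by apply: closed_openC; exact: closed_eq.
  + move=> x; rewrite inE => /eqP x0; exact: inv_continuous.
Qed.

End MeasurableInv.

Section DensityIntegral.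
Context {R : realType} {d : measure_display} {E : measurableType d}.
Variable lam : {measure set E -> \bar R}.

Definition dint (rho F : E -> R) : R := \int[lam]_y (F y * rho y).

Definition density (rho : E -> R) :=
  [/\ forall y, 0 <= rho y, measurable_fun setT rho & lam.-integrable setT (EFin \o rho)].

Definition bounded_mfun (F : E -> R) :=
  measurable_fun setT F /\ exists M, forall y, `|F y| <= M.

Lemma bounded_mfun_cst c : bounded_mfun (fun _ => c).
Proof. by split=> //; exists `|c|. Qed.

Lemma bounded_mfunD F G :
  bounded_mfun F -> bounded_mfun G -> bounded_mfun (fun y => F y + G y).
Proof.
move=> [mF [M FM]] [mG [M' GM]]; split; first exact: measurable_funD.
by exists (M + M') => y; apply: le_trans (ler_normD _ _) (lerD (FM y) (GM y)).
Qed.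

Lemma bounded_mfunM F G :
  bounded_mfun F -> bounded_mfun G -> bounded_mfun (fun y => F y * G y).
Proof.
move=> [mF [M FM]] [mG [M' GM]]; split; first exact: measurable_funM.
exists (M * M') => y; rewrite normrM; apply: ler_pM => //; exact: FM.
Qed.

Lemma bounded_mfunB F G :
  bounded_mfun F -> bounded_mfun G -> bounded_mfun (fun y => F y - G y).
Proof.
move=> bF bG; under eq_fun do rewrite -mulN1r.
by apply: bounded_mfunD => //; apply: bounded_mfunM => //; exact: bounded_mfun_cst.
Qed.

Lemma bounded_mfun_sum (I : Type) (r : seq I) (F : I -> E -> R) :
  (forall i, bounded_mfun (F i)) -> bounded_mfun (fun y => \sum_(i <- r) F i y).
Proof.
move=> bF; elim: r => [|i r IH].
  by under eq_fun do rewrite big_nil; exact: bounded_mfun_cst.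
by under eq_fun do rewrite big_cons; exact: bounded_mfunD.
Qed.

Lemma bounded_mfun01 (F : E -> R) :
  measurable_fun setT F -> (forall y, 0 <= F y <= 1) -> bounded_mfun F.
Proof.
by move=> mF F01; split=> //; exists 1 => y; case/andP: (F01 y) => F0 F1; rewrite ger0_norm.
Qed.

Lemma integrable_dint rho F : density rho -> bounded_mfun F ->
  lam.-integrable setT (EFin \o (fun y => F y * rho y)).
Proof.
move=> [r0 mr ir] [mF [M FM]].
apply: (@le_integrable _ _ _ lam _ measurableT _ (fun y => (`|M| * rho y)%:E)).
- by apply/measurable_EFinP; exact: measurable_funM.
- move=> y _ /=; rewrite lee_fin !normrM normr_id (ger0_norm (r0 y)).
  by rewrite ler_wpM2r // (le_trans (FM y)) // ler_norm.
- apply: (eq_integrable measurableT _ _ _ (integrableZl measurableT `|M| ir)) => y _ /=.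
  by rewrite EFinM.
Qed.

Lemma EFin_dint rho F : density rho -> bounded_mfun F ->
  (dint rho F)%:E = (\int[lam]_y (F y * rho y)%:E)%E.
Proof.
move=> rh bF; rewrite /dint /Rintegral fineK //.
exact: (integrable_fin_num measurableT (integrable_dint rh bF)).
Qed.

Lemma eq_dint rho rho' F G : (forall y, F y * rho y = G y * rho' y) -> dint rho F = dint rho' G.
Proof. by move=> FG; apply: eq_Rintegral => y _; exact: FG. Qed.

Lemma dintD rho F G : density rho -> bounded_mfun F -> bounded_mfun G ->
  dint rho (fun y => F y + G y) = dint rho F + dint rho G.
Proof.
move=> rh bF bG; rewrite /dint -RintegralD //; try exact: integrable_dint.
by apply: eq_Rintegral => y _; rewrite mulrDl.
Qed.

Lemma dintZ rho F c : density rho -> bounded_mfun F -> dint rho (fun y => c * F y) = c * dint rho F.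
Proof.
move=> rh bF; rewrite /dint -RintegralZl //; last exact: integrable_dint.
by apply: eq_Rintegral => y _; rewrite mulrA.
Qed.

Lemma dint_cst rho c : density rho -> dint rho (fun _ => c) = c * dint rho (fun _ => 1).
Proof.
move=> rh; rewrite -dintZ //; last exact: bounded_mfun_cst.
by apply: eq_dint => y; rewrite mulr1.
Qed.

Lemma dintB rho F G : density rho -> bounded_mfun F -> bounded_mfun G ->
  dint rho (fun y => F y - G y) = dint rho F - dint rho G.
Proof.
move=> rh bF bG; under eq_fun do rewrite -mulN1r.
rewrite dintD ?dintZ ?mulN1r //; apply: bounded_mfunM => //; exact: bounded_mfun_cst.
Qed.

Lemma dint_sum (I : Type) (r : seq I) rho (F : I -> E -> R) : density rho ->
  (forall i, bounded_mfun (F i)) ->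
  dint rho (fun y => \sum_(i <- r) F i y) = \sum_(i <- r) dint rho (F i).
Proof.
move=> rh bF; elim: r => [|i r IH].
  by under eq_fun do rewrite big_nil; rewrite big_nil dint_cst // mul0r.
under eq_fun do rewrite big_cons.
by rewrite big_cons dintD ?IH //; exact: bounded_mfun_sum.
Qed.

Lemma dint_ge0 rho F : density rho -> (forall y, 0 <= F y) -> 0 <= dint rho F.
Proof. by move=> [r0 _ _] F0; apply: Rintegral_ge0 => y _; exact: mulr_ge0. Qed.

Lemma ler_dint rho F G : density rho -> bounded_mfun F -> bounded_mfun G ->
  (forall y, F y <= G y) -> dint rho F <= dint rho G.
Proof.
move=> rh bF bG FG; apply: le_Rintegral => //; try exact: integrable_dint.
by move=> y _; case: rh => r0 _ _; exact: ler_wpM2r.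
Qed.

End DensityIntegral.

Section DensityFubini.
Context {R : realType} {d : measure_display} {E : measurableType d}.
Variable lam : {sigma_finite_measure set E -> \bar R}.

Lemma measurable_dint rho (G : E * E -> R) : density lam rho -> measurable_fun setT G ->
  (forall z, 0 <= G z) -> measurable_fun setT (fun b => dint lam rho (fun a => G (b, a))).
Proof.
move=> [r0 mr _] mG G0.
apply: (measurableT_comp (fine_measurable _) _) => //.
apply: (measurable_fun_fubini_tonelli_F (fun z => (G z * rho z.2)%:E)).
- apply/measurable_EFinP; apply: measurable_funM => //.
  exact: measurableT_comp mr measurable_snd.
- by move=> z; rewrite lee_fin mulr_ge0.
Qed.

Lemma dint_swap rho1 rho2 (G : E * E -> R) M : density lam rho1 -> density lam rho2 ->
  measurable_fun setT G -> (forall z, 0 <= G z <= M) ->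
  dint lam rho2 (fun b => dint lam rho1 (fun a => G (b, a)))
  = dint lam rho1 (fun a => dint lam rho2 (fun b => G (b, a))).
Proof.
move=> r1 r2 mG GM.
have G_bounded z : `|G z| <= M by case/andP: (GM z) => G0 GM'; rewrite ger0_norm.
have bG2 b : bounded_mfun (fun a => G (b, a)).
  by split; [exact: measurable_fun_pair2 | exists M => a; exact: G_bounded].
have bG1 a : bounded_mfun (fun b => G (b, a)).
  by split; [exact: measurable_fun_pair1 | exists M => b; exact: G_bounded].
have inner rho F c : density lam rho -> bounded_mfun F ->
    (dint lam rho F * c)%:E = (\int[lam]_y (F y * rho y * c)%:E)%E.
  by move=> rh bF; rewrite EFinM EFin_dint // -integralZr //; exact: integrable_dint.
rewrite /dint /Rintegral; congr fine.
transitivity (\int[lam]_b \int[lam]_a (G (b, a) * rho1 a * rho2 b)%:E)%E.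
  by apply: eq_integral => b _; rewrite inner.
transitivity (\int[lam]_a \int[lam]_b (G (b, a) * rho1 a * rho2 b)%:E)%E; last first.
  apply: eq_integral => a _; rewrite inner //.
  by apply: eq_integral => b _; rewrite mulrAC.
case: r1 r2 => [r10 mr1 _] [r20 mr2 _].
apply: (fubini_tonelli (fun z => (G z * rho1 z.2 * rho2 z.1)%:E)).
- apply/measurable_EFinP; apply: measurable_funM; first apply: measurable_funM => //.
  + exact: measurableT_comp mr1 measurable_snd.
  + exact: measurableT_comp mr2 measurable_fst.
- by move=> z; rewrite lee_fin !mulr_ge0 //; case/andP: (GM z).
Qed.

End DensityFubini.

(* The minorization needs a class of test functions closed under affine maps, while
   invariance of [nu] is only available on a class preserved by [K]. *)
Section Doeblin.
Variables (R : realFieldType) (T : Type) (S : set T) (eps : R).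
Variables (K : (T -> R) -> T -> R) (nu : (T -> R) -> R).
Variables (admissible stable : (T -> R) -> Prop).
Hypotheses (admissible_affine : forall g a b, admissible g -> admissible (fun z => a * g z + b))
  (K_affine : forall g a b x, admissible g -> K (fun z => a * g z + b) x = a * K g x + b)
  (nu_affine : forall g a b, admissible g -> nu (fun z => a * g z + b) = a * nu g + b)
  (K_minor : forall u x, admissible u -> S x -> (forall z, S z -> 0 <= u z) ->
     eps * nu u <= K u x).

Lemma doeblin_contraction g r x : admissible g -> S x ->
  (forall z, S z -> `|g z - nu g| <= r) -> `|K g x - nu g| <= (1 - eps) * r.
Proof.
move=> ag Sx gr.
have gr' z : S z -> - r <= g z - nu g <= r by rewrite -ler_norml; exact: gr.
have lo : eps * r <= K g x - nu g + r.
  have u_ge0 z : S z -> 0 <= 1 * g z + (r - nu g) by move/gr'/andP => [? ?]; lra.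
  have := K_minor (admissible_affine 1 (r - nu g) ag) Sx u_ge0.
  by rewrite K_affine // nu_affine // => ?; lra.
have hi : eps * r <= nu g - K g x + r.
  have u_ge0 z : S z -> 0 <= -1 * g z + (nu g + r) by move/gr'/andP => [? ?]; lra.
  have := K_minor (admissible_affine (-1) (nu g + r) ag) Sx u_ge0.
  by rewrite K_affine // nu_affine // => ?; lra.
rewrite ler_norml; apply/andP; split; lra.
Qed.

Hypotheses (stable_admissible : forall g, stable g -> admissible g)
  (stable_K : forall g, stable g -> stable (K g))
  (nu_K : forall g, stable g -> nu (K g) = nu g).

Lemma doeblin_geometric g r n x : stable g -> S x ->
  (forall z, S z -> `|g z - nu g| <= r) -> `|iter n K g x - nu g| <= (1 - eps) ^+ n * r.
Proof.
move=> sg; have iter_stable m : stable (iter m K g) by elim: m => //= m /stable_K.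
have nu_iter m : nu (iter m K g) = nu g by elim: m => //= m <-; exact/nu_K/iter_stable.
elim: n x => [|n IH] x Sx gr; first by rewrite mul1r; exact: gr.
rewrite exprS -mulrA /= -[in nu g](nu_iter n).
apply: doeblin_contraction => //; first exact/stable_admissible/iter_stable.
by move=> z Sz; rewrite nu_iter; exact: IH.
Qed.

End Doeblin.

Section Paths.
Context {R : realType} {d : measure_display} {E : measurableType d}.

Lemma prefix_snoc k (x : k.-tuple E) y : Defs.prefix (snoc x y) = x.
Proof.
apply: eq_from_tnth => i; rewrite /Defs.prefix tnth_mktuple /snoc.
by rewrite (tnth_nth y) (tnth_nth y) /= nth_rcons size_tuple ltn_ord.
Qed.

Lemma tlast_snoc k (x : k.-tuple E) y : tlast (snoc x y) = y.
Proof. by rewrite /tlast /snoc (tnth_nth y) /= nth_rcons size_tuple ltnn eqxx. Qed.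

Lemma measurable_snoc k (x : k.-tuple E) : measurable_fun setT (snoc x).
Proof.
apply/measurable_fun_tnthP => j /=.
have [jk|kj] := ltnP j k.
  rewrite (_ : _ \o _ = fun _ => nth point x j) //.
  by apply: funext => y /=; rewrite /snoc (tnth_nth point) /= nth_rcons size_tuple jk.
have jk : nat_of_ord j = k by apply/eqP; rewrite eqn_leq kj -ltnS ltn_ord.
rewrite (_ : _ \o _ = id) //.
by apply: funext => y /=; rewrite /snoc (tnth_nth point) /= nth_rcons size_tuple jk ltnn eqxx.
Qed.

Variables (p0 : E -> R) (trans : E -> E -> R) (lik : nat -> E -> R).

Lemma chain_rcons l prev (s : seq E) y :
  chain trans lik l prev (rcons s y) =
  chain trans lik l prev s * trans (last prev s) y * lik (l + size s)%N y.
Proof.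
elim: s l prev => [|x s IH] l prev /=; first by rewrite addn0 mul1r mulr1.
by rewrite IH addnS -addSn !mulrA.
Qed.

Lemma gamma_snoc k (x : k.-tuple E) : (0 < k)%N ->
  exists e, forall y, gamma p0 trans lik (snoc x y) = gamma p0 trans lik x * trans e y * lik k y.
Proof.
case: x => -[|x0 s] /= /eqP sz k_gt0; first by rewrite -sz in k_gt0.
by exists (last x0 s) => y; rewrite /snoc /= chain_rcons -sz /= add1n !mulrA.
Qed.

Hypotheses (p0_ge0 : forall x, 0 <= p0 x) (trans_ge0 : forall x y, 0 <= trans x y)
  (lik_ge0 : forall l x, 0 <= lik l x).

Lemma chain_ge0 l prev s : 0 <= chain trans lik l prev s.
Proof. by elim: s l prev => [|x s IH] l prev //=; rewrite !mulr_ge0. Qed.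

Lemma gamma_ge0 s : 0 <= gamma p0 trans lik s.
Proof. by case: s => [|x s] //=; rewrite mulr_ge0 // chain_ge0. Qed.

End Paths.

Lemma fine_ratio (R : realType) (a b : R) : fine (Defs.ratio a b) = a / b.
Proof. by rewrite /Defs.ratio; case: ifPn => [/eqP ->|//]; rewrite invr0 mulr0. Qed.

Section DrawKernel.
(* Without implicit arguments for the section variables, [q k x y] reads as in Defs. *)
Unset Implicit Arguments.
Context {R : realType} {d : measure_display} {E : measurableType d}.
Variable lam : {measure set E -> \bar R}.
Hypothesis lam_sigma_finite : sigma_finite setT lam.

(* [lam] again, now carrying its sigma-finiteness for Fubini's theorem. *)
Definition lamS : set E -> \bar R := lam.
HB.instance Definition _ := isMeasure.Build _ _ _ lamS (measure0 lam) (measure_ge0 lam)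
  (@measure_semi_sigma_additive _ _ _ lam).
HB.instance Definition _ := @Measure_isSigmaFinite.Build d E R lamS lam_sigma_finite.

Variables (p0 : E -> R) (trans : E -> E -> R) (lik : nat -> E -> R)
  (q : forall k : nat, k.-tuple E -> E -> R).
Hypotheses (p0_ge0 : forall x, 0 <= p0 x) (trans_ge0 : forall x y, 0 <= trans x y)
  (trans_m : measurable_fun setT (fun xy : E * E => trans xy.1 xy.2))
  (lik_ge0 : forall l x, 0 <= lik l x) (lik_m : forall l, measurable_fun setT (lik l))
  (Z_fin : forall k, (0 < Z lam p0 trans lik k < +oo)%E)
  (q_ge0 : forall k x y, 0 <= q k x y)
  (q_m : forall k, measurable_fun setT (fun xy : k.-tuple E * E => q k xy.1 xy.2))
  (q_int1 : forall k x, (\int[lam]_y (q k x y)%:E = 1)%E).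
Variables (k N : nat) (xs : 'I_N -> k.-tuple E) (B : R).
Hypotheses (weight_le : forall x : k.+1.-tuple E,
    inS lam p0 trans lik k x -> (weight p0 trans lik q x <= B%:E)%E)
  (k_gt0 : (0 < k)%N) (N_gt0 : (0 < N)%N)
  (xs_S : forall i, inS lam p0 trans lik k.-1 (xs i))
  (emp_gt0 : 0 < emp_int xs (@pikk1 R d E lam p0 trans lik k)).

Set Implicit Arguments.

Local Notation T := (k.+1.-tuple E).
Local Notation G := (gamma p0 trans lik).
Local Notation K := (Kint lam p0 trans lik q xs).
Local Notation al := (alpha p0 trans lik q).

Let G_ge0 (x : seq E) : 0 <= G x := gamma_ge0 p0_ge0 trans_ge0 lik_ge0 x.

Definition ext i y : T := snoc (xs i) y.
Definition qs i y := q k (xs i) y.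
(* [fine] sends the weight +oo of a zero denominator to 0; this happens only off S_k. *)
Definition wt (x : T) : R := fine (weight p0 trans lik q x).
Definition tgt i y := wt (ext i y) * qs i y.
Definition Bw := Num.max B 1.
Definition Zr j := fine (Z lam p0 trans lik j).

Lemma Zr_gt0 j : 0 < Zr j.
Proof. by rewrite /Zr fine_gt0. Qed.

Lemma piE j (x : seq E) : Defs.pi lam p0 trans lik j x = G x / Zr j.
Proof. by []. Qed.

Lemma inS_gamma j (x : seq E) : inS lam p0 trans lik j x <-> 0 < G x.
Proof.
rewrite /inS piE; split => [|Gx]; last by rewrite divr_gt0 // Zr_gt0.
by rewrite pmulr_lgt0 // invr_gt0 Zr_gt0.
Qed.

Lemma gamma_xs_gt0 i : 0 < G (xs i).
Proof. by apply/(inS_gamma k.-1); exact: xs_S. Qed.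

Lemma gamma_xs_neq0 i : G (xs i) != 0.
Proof. by rewrite gt_eqF ?gamma_xs_gt0. Qed.

Lemma Zr_neq0 j : Zr j != 0.
Proof. by rewrite gt_eqF ?Zr_gt0. Qed.

Lemma wtE (x : T) : wt x = G x / (G (Defs.prefix x) * q k (Defs.prefix x) (tlast x)).
Proof. by rewrite /wt /weight fine_ratio. Qed.

Lemma wt_ge0 (x : T) : 0 <= wt x.
Proof. by rewrite wtE divr_ge0 ?mulr_ge0. Qed.

Lemma weight_denom_neq0 (x : T) : 0 < G x ->
  G (Defs.prefix x) * q k (Defs.prefix x) (tlast x) != 0.
Proof.
move=> Gx; apply/negP => /eqP D0.
by have := weight_le x (proj2 (inS_gamma k x) Gx); rewrite /weight /Defs.ratio D0 eqxx.
Qed.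

Lemma gamma_le0_eq0 (x : seq E) : ~ 0 < G x -> G x = 0.
Proof. by move/negP; rewrite -leNgt => G0; apply/le_anti; rewrite G0 G_ge0. Qed.

Lemma wt_le (x : T) : wt x <= Bw.
Proof.
have [Gx|/negP/gamma_le0_eq0 G0] := boolP (0 < G x); last first.
  by rewrite wtE G0 mul0r le_max ler01 orbT.
have := weight_le x (proj2 (inS_gamma k x) Gx).
rewrite /weight /Defs.ratio (negbTE (weight_denom_neq0 Gx)) lee_fin => wB.
by rewrite wtE (le_trans wB) // le_max lexx.
Qed.

Lemma wt_gt0 (x : T) : 0 < G x -> 0 < wt x.
Proof.
move=> Gx; rewrite wtE divr_gt0 // lt_def (weight_denom_neq0 Gx).
by rewrite mulr_ge0.
Qed.

Lemma wt_eq0 (x : T) : ~ 0 < G x -> wt x = 0.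
Proof. by move/gamma_le0_eq0 => G0; rewrite wtE G0 mul0r. Qed.

Lemma Bw_gt0 : 0 < Bw.
Proof. by rewrite lt_max ltr01 orbT. Qed.

Lemma alphaE (x z : T) : al x z = Num.min 1 (wt z / wt x).
Proof. by []. Qed.

Lemma alpha_ge0 (x z : T) : 0 <= al x z.
Proof. by rewrite alphaE le_min ler01 divr_ge0 ?wt_ge0. Qed.

Lemma alpha_le1 (x z : T) : al x z <= 1.
Proof. by rewrite alphaE ge_min lexx. Qed.

Lemma wt_alpha (x z : T) : wt x * al x z = Num.min (wt x) (wt z).
Proof. by rewrite alphaE mulr_min1_div ?wt_ge0. Qed.

Lemma alpha_ge_wt (x z : T) : 0 < wt x -> wt z / Bw <= al x z.
Proof. by move=> wx; rewrite alphaE min1_div_ge ?wt_le ?wt_ge0. Qed.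

Lemma alpha_wt0 (x z : T) : wt z = 0 -> al x z = 0.
Proof. by rewrite alphaE => ->; rewrite mul0r min_r. Qed.

Lemma ext_prefix i y : Defs.prefix (ext i y) = xs i.
Proof. exact: prefix_snoc. Qed.

Lemma wt_ext i y : wt (ext i y) = G (ext i y) / (G (xs i) * qs i y).
Proof. by rewrite wtE ext_prefix /ext tlast_snoc. Qed.

Lemma tgtE i y : tgt i y = G (ext i y) / G (xs i).
Proof.
rewrite /tgt wt_ext; have [q0|q_neq0] := eqVneq (qs i y) 0; last first.
  by rewrite invfM mulrA mulfVK.
have [Gx|/negP/gamma_le0_eq0 ->] := boolP (0 < G (ext i y)); last by rewrite !mul0r.
by have := weight_denom_neq0 Gx; rewrite ext_prefix /ext tlast_snoc -/(qs i y) q0 mulr0 eqxx.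
Qed.

Lemma measurable_qs i : measurable_fun setT (qs i).
Proof. exact: (measurable_fun_pair2 (xs i) (q_m k)). Qed.

Lemma measurable_gamma_ext i : measurable_fun setT (fun y => G (ext i y)).
Proof.
have [e Ge] := gamma_snoc p0 trans lik (xs i) k_gt0.
under eq_fun do rewrite /ext Ge.
apply: measurable_funM => //; apply: measurable_funM => //.
exact: (measurable_fun_pair2 e trans_m).
Qed.

Lemma measurable_wt_ext i : measurable_fun setT (fun y => wt (ext i y)).
Proof.
under eq_fun do rewrite wt_ext.
apply: measurable_funM; first exact: measurable_gamma_ext.
apply: measurableT_comp; first exact: measurable_inv.
by apply: measurable_funM => //; exact: measurable_qs.
Qed.

Lemma density_qs i : density lamS (qs i).
Proof.
split; [by move=> y; exact: q_ge0 | exact: measurable_qs |].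
apply/integrableP; split; first by apply/measurable_EFinP; exact: measurable_qs.
under eq_integral do rewrite /= ger0_norm ?q_ge0 //.
by rewrite (q_int1 k (xs i)) ltey.
Qed.

Lemma bounded_wt_ext i : bounded_mfun (fun y => wt (ext i y)).
Proof.
split; first exact: measurable_wt_ext.
by exists Bw => y; rewrite ger0_norm ?wt_ge0 ?wt_le.
Qed.

Lemma density_tgt i : density lamS (tgt i).
Proof.
split; [by move=> y; rewrite /tgt mulr_ge0 ?wt_ge0 ?q_ge0 | |].
  by apply: measurable_funM; [exact: measurable_wt_ext | exact: measurable_qs].
exact: (integrable_dint (density_qs i) (bounded_wt_ext i)).
Qed.

Lemma dint_qs1 i : dint lamS (qs i) (fun _ => 1) = 1.
Proof.
rewrite /dint /Rintegral; under eq_integral do rewrite mul1r.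
by rewrite (q_int1 k (xs i)).
Qed.

(* [Phi g / N] integrates [wt * g] against the proposal mixture pihat_{k-1} x q_k. *)
Definition Phi (g : T -> R) := \sum_(i < N) dint lamS (tgt i) (fun y => g (ext i y)).
Definition tmass i := dint lamS (tgt i) (fun _ => 1).
Definition Zratio := Zr k.-1 / Zr k.

Definition sec_bounded (g : T -> R) := forall i, bounded_mfun (fun y => g (ext i y)).
Definition sec_unit (g : T -> R) :=
  (forall i, measurable_fun setT (fun y => g (ext i y))) /\ (forall x, 0 <= g x <= 1).

Lemma sec_unit_bounded g : sec_unit g -> sec_bounded g.
Proof. by move=> [mg g01] i; apply: bounded_mfun01 => // y; exact: g01. Qed.

Lemma piMarg_xs i : piMarg lam p0 trans lik (xs i) = G (xs i) / Zr k * tmass i.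
Proof.
rewrite /tmass -dint_cst; last exact: density_tgt.
rewrite /piMarg /dint /Rintegral; congr fine; apply: eq_integral => y _; congr EFin.
by rewrite piE tgtE; field; rewrite ?gamma_xs_neq0 ?Zr_neq0.
Qed.

Lemma pikk1_xs i : pikk1 lam p0 trans lik (xs i) = Zratio * tmass i.
Proof.
by rewrite /pikk1 piMarg_xs piE /Zratio; field; rewrite ?gamma_xs_neq0 ?Zr_neq0.
Qed.

Lemma pibar_xs i y : pibar lam p0 trans lik (xs i) y = tgt i y / tmass i.
Proof.
rewrite /pibar piMarg_xs piE tgtE.
have [->|tm_neq0] := eqVneq (tmass i) 0; first by rewrite !(mulr0, invr0).
by field; rewrite ?gamma_xs_neq0 ?Zr_neq0 ?tm_neq0.
Qed.

Lemma dint_tgt_eq0 i F : tmass i = 0 -> bounded_mfun F -> (forall y, 0 <= F y <= 1) ->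
  dint lamS (tgt i) F = 0.
Proof.
move=> tm0 bF F01; apply/le_anti; rewrite dint_ge0 ?andbT; last 2 first.
- exact: density_tgt.
- by move=> y; case/andP: (F01 y).
rewrite -tm0; apply: ler_dint => //; [exact: density_tgt | exact: bounded_mfun_cst |].
by move=> y; case/andP: (F01 y).
Qed.

Lemma pibreve_term f i : sec_unit f ->
  dint lamS (pibar lam p0 trans lik (xs i))
     (fun y => pikk1 lam p0 trans lik (Defs.prefix (ext i y)) * f (ext i y))
  = Zratio * dint lamS (tgt i) (fun y => f (ext i y)).
Proof.
move=> uf; have bf := sec_unit_bounded uf i.
have [tm0|tm_neq0] := eqVneq (tmass i) 0.
  rewrite dint_tgt_eq0 // ?mulr0; last by move=> y; exact: uf.2.
  rewrite -(@dint_tgt_eq0 i (fun _ => 0)) //; last by move=> y; rewrite lexx ler01.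
  - by apply: eq_dint => y; rewrite pibar_xs tm0 invr0 !mulr0 mul0r.
  - exact: bounded_mfun_cst.
rewrite -dintZ //; last exact: density_tgt.
by apply: eq_dint => y; rewrite pibar_xs ext_prefix pikk1_xs; field.
Qed.

Lemma emp_pikk1 : emp_int xs (@pikk1 R d E lam p0 trans lik k)
  = N%:R^-1 * (Zratio * Phi (fun _ => 1)).
Proof.
rewrite /emp_int /Phi; congr (_ * _); rewrite mulr_sumr; apply: eq_bigr => i _.
by rewrite pikk1_xs.
Qed.

Lemma pibreve_intE f : sec_unit f ->
  pibreve_int lam p0 trans lik xs f = Phi f / Phi (fun _ => 1).
Proof.
move=> uf; rewrite /pibreve_int emp_pikk1.
rewrite (_ : empmix lam xs _ _
    = N%:R^-1 * \sum_(i < N) Zratio * dint lamS (tgt i) (fun y => f (ext i y)));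
  last by congr (_ * _); apply: eq_bigr => i _; rewrite -pibreve_term.
rewrite -mulr_sumr -/(Phi f) !mulrA -mulf_div divff ?mul1r //.
by rewrite !mulf_neq0 ?invr_eq0 ?pnatr_eq0 -?lt0n ?Zr_neq0.
Qed.

Lemma KintE (f : T -> R) (x : T) : K f x =
  N%:R^-1 * \sum_(i < N) dint lamS (qs i) (fun y => al x (ext i y) * f (ext i y))
  + (1 - N%:R^-1 * \sum_(i < N) dint lamS (qs i) (fun y => al x (ext i y))) * f x.
Proof. by []. Qed.

Lemma dint_qs_01 i F : bounded_mfun F -> (forall y, 0 <= F y <= 1) ->
  0 <= dint lamS (qs i) F <= 1.
Proof.
move=> bF F01; rewrite dint_ge0 /=; [|exact: density_qs|by move=> y; case/andP: (F01 y)].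
rewrite -(dint_qs1 i); apply: ler_dint; [exact: density_qs|exact: bF|exact: bounded_mfun_cst|].
by move=> y; case/andP: (F01 y).
Qed.

Lemma measurable_alpha_ext2 j i :
  measurable_fun setT (fun z : E * E => al (ext j z.1) (ext i z.2)).
Proof.
apply: measurable_minr; first exact: measurable_cst.
apply: measurable_funM; first exact: measurableT_comp (measurable_wt_ext i) measurable_snd.
apply: measurableT_comp; first exact: measurable_inv.
exact: measurableT_comp (measurable_wt_ext j) measurable_fst.
Qed.

Lemma bounded_alpha_ext x i : bounded_mfun (fun a => al x (ext i a)).
Proof.
apply: bounded_mfun01; last by move=> a; rewrite alpha_ge0 alpha_le1.
apply: measurable_minr; first exact: measurable_cst.
by apply: measurable_funM; [exact: measurable_wt_ext | exact: measurable_cst].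
Qed.

Lemma Kint_01 g x : sec_unit g -> 0 <= K g x <= 1.
Proof.
move=> ug; have bg := sec_unit_bounded ug; rewrite KintE.
set a := N%:R^-1 * _; set b := N%:R^-1 * _.
have g01 y : 0 <= g y <= 1 := ug.2 y.
have /andP[a0 a1] : 0 <= a <= 1.
  apply: mean_01 => // i; apply: dint_qs_01.
    exact: bounded_mfunM (bounded_alpha_ext x i) (bg i).
  move=> y; case/andP: (g01 (ext i y)) => g0 g1.
  by rewrite mulr_ge0 ?alpha_ge0 //= mulr_ile1 ?alpha_ge0 ?alpha_le1.
have /andP[b0 b1] : 0 <= b <= 1.
  apply: mean_01 => // i; apply: dint_qs_01; first exact: bounded_alpha_ext.
  by move=> y; rewrite alpha_ge0 alpha_le1.
have ab : a <= b.
  rewrite ler_wpM2l ?invr_ge0 ?ler0n //; apply: ler_sum => i _; apply: ler_dint.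
  - exact: density_qs.
  - exact: bounded_mfunM (bounded_alpha_ext x i) (bg i).
  - exact: bounded_alpha_ext.
  - by move=> y; case/andP: (g01 (ext i y)) => g0 g1; rewrite ler_piMr ?alpha_ge0.
case/andP: (g01 x) => g0 g1; apply/andP; split; nra.
Qed.

Section UnitFunction.
Variable g : T -> R.
Hypothesis ug : sec_unit g.

Definition inflow i j b := dint lamS (qs i) (fun a => al (ext j b) (ext i a) * g (ext i a)).
Definition outflow i j b := dint lamS (qs i) (fun a => al (ext j b) (ext i a)) * g (ext j b).

Lemma Kint_ext j b :
  K g (ext j b) = g (ext j b) + N%:R^-1 * \sum_(i < N) (inflow i j b - outflow i j b).
Proof. by rewrite KintE sumrB /outflow -mulr_suml /inflow; ring. Qed.

Lemma bounded_inflow i j : bounded_mfun (inflow i j).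
Proof.
split.
  apply: (measurable_dint (density_qs i)
    (G := fun z => al (ext j z.1) (ext i z.2) * g (ext i z.2))).
    apply: measurable_funM; first exact: measurable_alpha_ext2.
    exact: measurableT_comp (ug.1 i) measurable_snd.
  by move=> z; rewrite mulr_ge0 ?alpha_ge0 //; case/andP: (ug.2 (ext i z.2)).
exists 1 => b; have /andP[f0 f1] : 0 <= inflow i j b <= 1.
  apply: dint_qs_01; first exact: bounded_mfunM (bounded_alpha_ext _ i) (sec_unit_bounded ug i).
  move=> a; case/andP: (ug.2 (ext i a)) => g0 g1.
  by rewrite mulr_ge0 ?alpha_ge0 //= mulr_ile1 ?alpha_ge0 ?alpha_le1.
by rewrite ger0_norm.
Qed.

Lemma bounded_outflow i j : bounded_mfun (outflow i j).
Proof.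
apply: bounded_mfunM; last exact: sec_unit_bounded.
split.
  apply: (measurable_dint (G := fun z => al (ext j z.1) (ext i z.2)) (density_qs i)).
    exact: measurable_alpha_ext2.
  by move=> z; exact: alpha_ge0.
exists 1 => b; have /andP[f0 f1] := dint_qs_01 i (bounded_alpha_ext (ext j b) i)
  (fun a => introT andP (conj (alpha_ge0 _ _) (alpha_le1 _ _))).
by rewrite ger0_norm.
Qed.

Lemma sec_unit_Kint : sec_unit (K g).
Proof.
split=> [j|x]; last exact: Kint_01.
under eq_fun do rewrite Kint_ext.
apply: (bounded_mfunD (sec_unit_bounded ug j) _).1.
apply: bounded_mfunM; first exact: bounded_mfun_cst.
by apply: bounded_mfun_sum => i; exact: bounded_mfunB (bounded_inflow i j) (bounded_outflow i j).
Qed.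

(* Both sides are the double integral of min(w_k(ext j b), w_k(ext i a)) g(ext i a)
   against q_j(b) q_i(a). *)
Lemma detailed_balance i j : dint lamS (tgt j) (inflow i j) = dint lamS (tgt i) (outflow j i).
Proof.
pose m z := Num.min (wt (ext j z.1)) (wt (ext i z.2)) * g (ext i z.2).
have m_m : measurable_fun setT m.
  apply: measurable_funM; last exact: measurableT_comp (ug.1 i) measurable_snd.
  apply: measurable_minr; first exact: measurableT_comp (measurable_wt_ext j) measurable_fst.
  exact: measurableT_comp (measurable_wt_ext i) measurable_snd.
have m_bnd z : 0 <= m z <= Bw.
  case/andP: (ug.2 (ext i z.2)) => g0 g1.
  rewrite mulr_ge0 ?le_min ?wt_ge0 //= -[Bw]mulr1 ler_pM ?le_min ?wt_ge0 //.
  by rewrite ge_min wt_le.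
transitivity (dint lamS (qs j) (fun b => dint lamS (qs i) (fun a => m (b, a)))).
  apply: eq_dint => b; rewrite /tgt mulrA [inflow i j b * _]mulrC /inflow -dintZ; last 2 first.
  - exact: density_qs.
  - exact: bounded_mfunM (bounded_alpha_ext _ i) (sec_unit_bounded ug i).
  by congr (_ * _); apply: eq_dint => a; rewrite /m mulrA wt_alpha.
rewrite (dint_swap (density_qs i) (density_qs j) m_m m_bnd).
apply: eq_dint => a; rewrite /outflow /tgt mulrA; congr (_ * _).
rewrite -mulrA mulrC -dintZ; [|exact: density_qs|exact: bounded_alpha_ext].
by apply: eq_dint => b; congr (_ * _); rewrite /m /= minC -wt_alpha; ring.
Qed.

Lemma Phi_Kint : Phi (K g) = Phi g.
Proof.
have bflow i j : bounded_mfun (fun b => inflow i j b - outflow i j b).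
  exact: bounded_mfunB (bounded_inflow i j) (bounded_outflow i j).
transitivity (\sum_(j < N) (dint lamS (tgt j) (fun b => g (ext j b))
   + N%:R^-1 * \sum_(i < N) (dint lamS (tgt j) (inflow i j) - dint lamS (tgt j) (outflow i j)))).
  apply: eq_bigr => j _; under eq_fun do rewrite Kint_ext.
  have bsum : bounded_mfun (fun b => \sum_(i < N) (inflow i j b - outflow i j b)).
    exact: bounded_mfun_sum (fun i => bflow i j).
  have bsumZ := bounded_mfunM (bounded_mfun_cst N%:R^-1) bsum.
  rewrite dintD; [|exact: density_tgt|exact: sec_unit_bounded|exact: bsumZ].
  rewrite dintZ; [|exact: density_tgt|exact: bsum].
  rewrite dint_sum; [|exact: density_tgt|by move=> i; exact: bflow].
  congr (_ + _ * _); apply: eq_bigr => i _.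
  by rewrite dintB; [|exact: density_tgt|exact: bounded_inflow|exact: bounded_outflow].
rewrite big_split /= -mulr_sumr.
under [X in _ * X]eq_bigr do rewrite sumrB.
rewrite sumrB [X in X - _](eq_bigr _ (fun j _ => eq_bigr _ (fun i _ => detailed_balance i j))).
by rewrite exchange_big subrr mulr0 addr0.
Qed.

End UnitFunction.

Definition nuPhi (g : T -> R) := Phi g / Phi (fun _ => 1).
Definition eps := Phi (fun _ => 1) / (N%:R * Bw).

Lemma NBw_gt0 : 0 < N%:R * Bw.
Proof. by rewrite mulr_gt0 ?ltr0n ?Bw_gt0. Qed.

Lemma Phi1_gt0 : 0 < Phi (fun _ => 1).
Proof.
have := emp_gt0; rewrite emp_pikk1 mulrA pmulr_rgt0 //.
by rewrite mulr_gt0 ?invr_gt0 ?ltr0n // divr_gt0 ?Zr_gt0.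
Qed.

Lemma Phi1_neq0 : Phi (fun _ => 1) != 0.
Proof. by rewrite gt_eqF ?Phi1_gt0. Qed.

Lemma Phi1_le : Phi (fun _ => 1) <= N%:R * Bw.
Proof.
rewrite /Phi (_ : N%:R * Bw = \sum_(i < N) Bw); last by rewrite sumr_const card_ord mulr_natl.
apply: ler_sum => i _.
rewrite (@eq_dint _ _ _ lamS _ (qs i) _ (fun a => wt (ext i a))); last by move=> a; rewrite mul1r.
rewrite -[Bw]mulr1 -(dint_qs1 i) -dint_cst; last exact: density_qs.
apply: ler_dint; [exact: density_qs | exact: bounded_wt_ext | exact: bounded_mfun_cst |].
by move=> y; exact: wt_le.
Qed.

Lemma eps_gt0 : 0 < eps.
Proof. by rewrite divr_gt0 ?Phi1_gt0 ?NBw_gt0. Qed.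

Lemma eps_le1 : eps <= 1.
Proof. by rewrite ler_pdivrMr ?NBw_gt0 // mul1r Phi1_le. Qed.

Lemma nuPhi_01 g : sec_unit g -> 0 <= nuPhi g <= 1.
Proof.
move=> ug; have g01 i y : 0 <= g (ext i y) <= 1 := ug.2 (ext i y).
have Phi_ge0 : 0 <= Phi g.
  apply: sumr_ge0 => i _; apply: dint_ge0; first exact: density_tgt.
  by move=> y; case/andP: (g01 i y).
rewrite /nuPhi divr_ge0 ?(ltW Phi1_gt0) //= ler_pdivrMr ?Phi1_gt0 // mul1r.
apply: ler_sum => i _.
apply: ler_dint; [exact: density_tgt | exact: sec_unit_bounded | exact: bounded_mfun_cst |].
by move=> y; case/andP: (g01 i y).
Qed.

Lemma sec_bounded_affine g a b : sec_bounded g -> sec_bounded (fun z => a * g z + b).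
Proof.
move=> bg i; apply: bounded_mfunD; last exact: bounded_mfun_cst.
by apply: bounded_mfunM; [exact: bounded_mfun_cst | exact: bg].
Qed.

Lemma Kint_affine g a b x : sec_bounded g -> K (fun z => a * g z + b) x = a * K g x + b.
Proof.
move=> bg; rewrite !KintE.
have dint_affine i : dint lamS (qs i) (fun y => al x (ext i y) * (a * g (ext i y) + b))
   = a * dint lamS (qs i) (fun y => al x (ext i y) * g (ext i y))
     + b * dint lamS (qs i) (fun y => al x (ext i y)).
  have dq := density_qs i; have bal := bounded_alpha_ext x i.
  have balg := bounded_mfunM bal (bg i).
  have baZ : bounded_mfun (fun y => a * (al x (ext i y) * g (ext i y))).
    by apply: bounded_mfunM => //; exact: bounded_mfun_cst.
  have bbZ : bounded_mfun (fun y => b * al x (ext i y)).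
    by apply: bounded_mfunM => //; exact: bounded_mfun_cst.
  rewrite -dintZ // -[b * _]dintZ // -dintD //.
  by apply: eq_dint => y; ring.
under eq_bigr do rewrite dint_affine.
by rewrite big_split /= -!mulr_sumr; ring.
Qed.

Lemma Phi_affine g a b : sec_bounded g ->
  Phi (fun z => a * g z + b) = a * Phi g + b * Phi (fun _ => 1).
Proof.
move=> bg; rewrite /Phi !mulr_sumr -big_split; apply: eq_bigr => i _ /=.
have dt := density_tgt i.
rewrite dintD ?dintZ -?dint_cst //; last exact: bounded_mfun_cst.
by apply: bounded_mfunM; [exact: bounded_mfun_cst | exact: bg].
Qed.

Lemma nuPhi_affine g a b : sec_bounded g -> nuPhi (fun z => a * g z + b) = a * nuPhi g + b.
Proof.
by move=> bg; rewrite /nuPhi Phi_affine //; field; exact: Phi1_neq0.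
Qed.

Lemma Kint_minor u (x : T) : sec_bounded u -> 0 < G x -> (forall z : T, 0 < G z -> 0 <= u z) ->
  eps * nuPhi u <= K u x.
Proof.
move=> bu Gx u_ge0; rewrite KintE.
have -> : eps * nuPhi u = N%:R^-1 * Phi u / Bw.
  by rewrite /eps /nuPhi; field; rewrite Phi1_neq0 pnatr_eq0 -lt0n N_gt0 gt_eqF ?Bw_gt0.
have /andP[_ b1] : 0 <= N%:R^-1 * \sum_(i < N) dint lamS (qs i) (fun y => al x (ext i y)) <= 1.
  apply: mean_01 => // i; apply: dint_qs_01; first exact: bounded_alpha_ext.
  by move=> y; rewrite alpha_ge0 alpha_le1.
rewrite -[X in X <= _]addr0; apply: lerD; last by rewrite mulr_ge0 ?subr_ge0 ?u_ge0.
rewrite -mulrA ler_wpM2l ?invr_ge0 ?ler0n // /Phi mulr_suml; apply: ler_sum => i _.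
rewrite -[_ / Bw]mulrC -dintZ; [|exact: density_tgt | exact: bu].
rewrite (@eq_dint _ _ _ lamS _ (qs i) _ (fun a => wt (ext i a) / Bw * u (ext i a)));
  last by move=> a; rewrite /tgt; ring.
have bwt : bounded_mfun (fun a => wt (ext i a) / Bw).
  by apply: bounded_mfunM; [exact: bounded_wt_ext | exact: bounded_mfun_cst].
apply: ler_dint; [exact: density_qs | exact: bounded_mfunM bwt (bu i) | |].
  by apply: bounded_mfunM; [exact: bounded_alpha_ext | exact: bu].
move=> a; have [Gs|/negP Gs] := boolP (0 < G (ext i a)).
  by rewrite ler_wpM2r ?u_ge0 // alpha_ge_wt // wt_gt0.
by rewrite (wt_eq0 Gs) (alpha_wt0 _ (wt_eq0 Gs)) !mul0r.
Qed.

Lemma sec_unit_indic (A : set T) : measurable A -> sec_unit (\1_A).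
Proof.
move=> mA; split=> [i|x]; last by rewrite indicE ler0n lern1 leq_b1.
by apply: measurableT_comp; [exact: measurable_indic | exact: measurable_snoc].
Qed.

Lemma Kn_iter n (A : set T) : (fun x => Kn lam p0 trans lik q xs n x A) = iter n K (\1_A).
Proof. by elim: n => //= n <-. Qed.

Lemma Kdraw_invariant (A : set T) : measurable A ->
  pibreve_int lam p0 trans lik xs (fun x => Kn lam p0 trans lik q xs 1 x A)
  = pibreve lam p0 trans lik xs A.
Proof.
move=> mA; have uA := sec_unit_indic mA.
by rewrite /pibreve (Kn_iter 1) /= !pibreve_intE ?Phi_Kint //; exact: sec_unit_Kint.
Qed.

Lemma Kdraw_uniformly_ergodic : exists C rho : R, 0 <= rho < 1 /\
  forall n (x : T) (A : set T), inS lam p0 trans lik k x -> measurable A ->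
    `|Kn lam p0 trans lik q xs n x A - pibreve lam p0 trans lik xs A| <= C * rho ^+ n.
Proof.
exists 1, (1 - eps); split; first by have := eps_gt0; have := eps_le1; lra.
move=> n x A /inS_gamma Gx mA; have uA := sec_unit_indic mA.
rewrite mul1r /pibreve pibreve_intE // -/(nuPhi _).
have -> : Kn lam p0 trans lik q xs n x A = iter n K (\1_A) x by rewrite -Kn_iter.
rewrite -[_ ^+ n]mulr1; apply: (doeblin_geometric (S := [set z : T | 0 < G z])
  (K := K) (nu := nuPhi) (admissible := sec_bounded) (stable := sec_unit)) => //.
- exact: sec_bounded_affine.
- exact: Kint_affine.
- exact: nuPhi_affine.
- exact: Kint_minor.
- exact: sec_unit_bounded.
- exact: sec_unit_Kint.
- by move=> g ug; rewrite /nuPhi Phi_Kint.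
- move=> z _; have /andP[i0 i1] := uA.2 z.
  have /andP[n0 n1] := nuPhi_01 uA.
  by rewrite ler_norml; apply/andP; split; lra.
Qed.

End DrawKernel.

Theorem proposition1 (R : realType) (d : measure_display) (E : measurableType d)
  (lam : {measure set E -> \bar R})
  (p0 : E -> R) (trans : E -> E -> R) (lik : nat -> E -> R)
  (q : forall k : nat, k.-tuple E -> E -> R) :
  (* reference measure *)
  sigma_finite setT lam ->
  (* initial density *)
  (forall x, 0 <= p0 x) -> measurable_fun setT p0 ->
  (\int[lam]_x (p0 x)%:E = 1)%E ->
  (* transition densities *)
  (forall x y, 0 <= trans x y) ->
  measurable_fun setT (fun xy : E * E => trans xy.1 xy.2) ->
  (forall x, \int[lam]_y (trans x y)%:E = 1)%E ->
  (* likelihoods at the fixed observations *)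
  (forall l x, 0 <= lik l x) -> (forall l, measurable_fun setT (lik l)) ->
  (* normalising constants *)
  (forall k, (0 < Z lam p0 trans lik k < +oo)%E) ->
  (* proposals (q 0 is q_0) *)
  (forall k x y, 0 <= q k x y) ->
  (forall k, measurable_fun setT (fun xy : k.-tuple E * E => q k xy.1 xy.2)) ->
  (forall k x, \int[lam]_y (q k x y)%:E = 1)%E ->
  (* bounded weights on S_k, for every k >= 0 *)
  (forall k, exists B : R, forall x : k.+1.-tuple E,
      inS lam p0 trans lik k x -> (weight p0 trans lik q x <= B%:E)%E) ->
  forall (k : nat), (0 < k)%N ->
  forall (N : nat) (xs : 'I_N -> k.-tuple E), (0 < N)%N ->
  (* samples at time k-1 lie in S_{k-1} *)
  (forall i, inS lam p0 trans lik k.-1 (xs i)) ->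
  (* breve{pi}_k is well defined: pihat_{k-1}(pi_{k/k-1}) > 0 *)
  0 < emp_int xs (@pikk1 R d E lam p0 trans lik k) ->
  (* invariance *)
  (forall A : set (k.+1.-tuple E), measurable A ->
     pibreve_int lam p0 trans lik xs
       (fun x => Kn lam p0 trans lik q xs 1 x A)
     = pibreve lam p0 trans lik xs A)
  /\
  (* uniform ergodicity on S_k *)
  (exists (C rho : R), 0 <= rho < 1 /\
     forall (n : nat) (x : k.+1.-tuple E) (A : set (k.+1.-tuple E)),
       inS lam p0 trans lik k x -> measurable A ->
       `| Kn lam p0 trans lik q xs n x A - pibreve lam p0 trans lik xs A |
         <= C * rho ^+ n).
Proof.
move=> lam_sf p0_ge0 _ _ trans_ge0 trans_m _ lik_ge0 lik_m Z_fin q_ge0 q_m q_int1 w_bounded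
  k k_gt0 N xs N_gt0 xs_S emp_gt0.
have [B weight_le] := w_bounded k.
split; [eapply Kdraw_invariant | eapply Kdraw_uniformly_ergodic]; eassumption.
Qed.
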